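(* Consider an infinite balls-in-bins process with $d\ge1$ labeled bins: at each time $t=1,2,\ldots$ one ball is placed into a bin chosen uniformly at random from $\{1,\ldots,d\}$, independently over time, and $N^{(i)}_t$ denotes the number of balls in bin $i$ at time $t$. Then almost surely: (1) for each fixed $i\in[d]$, $N^{(i)}_t=\max_{j\in[d]}N^{(j)}_t$ for infinitely many $t$; (2) for each fixed $i,j\in[d]$, $N^{(i)}_t=N^{(j)}_t=\max_{k\in[d]}N^{(k)}_t$ for infinitely many $t$. *)

From HB Require Import structures.
From mathcomp Require Import all_boot all_order all_algebra.
From mathcomp Require Import all_classical all_reals all_analysis.
Set Implicit Arguments. Unset Strict Implicit. Unset Printing Implicit Defensive.
Import Order.TTheory GRing.Theory Num.Theory.
Local Open Scope classical_set_scope.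
Local Open Scope ring_scope.

(* Balls-in-bins process: X t w : 'I_d is the bin receiving the ball at
   time t.+1 (times t = 1,2,... of the paper are indexed 0,1,... here).
   [iid_uniform P X]: each event {X t = k} is measurable, and for every
   finite set of distinct times s and every assignment of bins v, the
   probability that X t = v t for all t in s is (1/d)^|s|, i.e. the X t
   are mutually independent and uniformly distributed on 'I_d. *)
Definition iid_uniform (dsp : measure_display) (T : measurableType dsp)
  (R : realType) (P : probability T R) (d : nat) (X : nat -> T -> 'I_d) : Prop :=
  (forall (t : nat) (k : 'I_d), measurable (X t @^-1` [set k])) /\
  (forall (s : seq nat) (v : nat -> 'I_d), uniq s ->
     P (\big[setI/setT]_(t <- s) (X t @^-1` [set v t])) =
     (((d%:R)^-1) ^+ size s)%:E).

Definition nballs (T : Type) (d : nat) (X : nat -> T -> 'I_d)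
  (i : 'I_d) (t : nat) (w : T) : nat :=
  \sum_(s < t) (X s w == i).

Definition maxballs (T : Type) (d : nat) (X : nat -> T -> 'I_d)
  (t : nat) (w : T) : nat :=
  \max_(j < d) nballs X j t w.

From HB Require Import structures.
From mathcomp Require Import all_boot all_order all_algebra all_fingroup.
From mathcomp Require Import all_classical all_reals all_analysis.
From mathcomp Require Import zify ring lra.
Set Implicit Arguments. Unset Strict Implicit. Unset Printing Implicit Defensive.
Import Order.TTheory GRing.Theory Num.Theory.
Local Open Scope classical_set_scope.

(* Fix bins i, j and let B m n be the event that i and j are never leaders
   simultaneously at a time t in [m, n]. The event "B m n for all n" is not
   affected by exchanging the first two blocks of k balls when 2 k <= m, since
   the counts at times t >= m are unchanged. This gives a Hewitt-Savage type
   zero-one law: p = lim_m lim_n P(B m n) satisfies p <= p^2, so p is 0 or 1.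
   The value 1 is excluded using the symmetry of the bins. For i = j: some bin
   leads at every time, so the d events "bin l does not lead at time m" cannot
   all have probability close to 1. For i <> j: if no two bins tie at the top
   during [m, n], the leader at time m keeps the lead, so i or j never leads,
   which by the case i = j is unlikely for n large. *)

Lemma big_ord_involution (R : Type) (idx : R) (op : Monoid.com_law idx)
    (t : nat) (sigma : nat -> nat) (F : nat -> R) :
  involutive sigma -> (forall k, k < t -> sigma k < t) ->
  \big[op/idx]_(s < t) F (sigma s) = \big[op/idx]_(s < t) F s.
Proof.
move=> sigmaK sigma_lt; pose sigma_ord (s : 'I_t) := Ordinal (sigma_lt s (ltn_ord s)).
have sigma_ordK : involutive sigma_ord by move=> s; apply: val_inj; rewrite /= sigmaK.
by rewrite (reindex_inj (inv_inj sigma_ordK)) /=; apply: eq_bigr => s _; rewrite sigmaK.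
Qed.

Definition swap_blocks (n k : nat) : nat :=
  if k < n then k + n else if k < n + n then k - n else k.

Lemma swap_blocksK n : involutive (swap_blocks n).
Proof. by move=> k; rewrite /swap_blocks; do !case: ifP; lia. Qed.

Lemma swap_blocks_lt n N k : n + n <= N -> k < N -> swap_blocks n k < N.
Proof. by rewrite /swap_blocks; do !case: ifP; lia. Qed.

Lemma swap_blocks_shift n k : k < n -> swap_blocks n (k + n) = k.
Proof. by rewrite /swap_blocks; do !case: ifP; lia. Qed.

Lemma exists_perm_pair (T : finType) (i j k l : T) : i != j -> k != l ->
  exists s : {perm T}, s i = k /\ s j = l.
Proof.
move=> ij kl; pose j' := tperm i k j.
have j'k : j' != k.
  by rewrite /j' -[in X in _ != X](tpermL i k) (inj_eq perm_inj) eq_sym.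
exists (tperm i k * tperm j' l)%g; rewrite !permM tpermL tpermL; split => //.
by rewrite tpermD // eq_sym.
Qed.

Section Words.
Variable d : nat.

Definition word := nat -> 'I_d.

Implicit Types (x y : word) (i j l : 'I_d) (A B : word -> bool).

Definition determined (N : nat) A :=
  forall x y, (forall k, k < N -> x k = y k) -> A x = A y.

Lemma determined_le N N' A : N <= N' -> determined N A -> determined N' A.
Proof. by move=> NN' detA x y xy; apply: detA => k kN; apply: xy; apply: leq_trans NN'. Qed.

Lemma determined_and N A B :
  determined N A -> determined N B -> determined N (fun x => A x && B x).
Proof. by move=> detA detB x y xy; rewrite (detA x y xy) (detB x y xy). Qed.

Lemma determined_or N A B :
  determined N A -> determined N B -> determined N (fun x => A x || B x).
Proof. by move=> detA detB x y xy; rewrite (detA x y xy) (detB x y xy). Qed.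

Lemma determined_neg N A : determined N A -> determined N (fun x => ~~ A x).
Proof. by move=> detA x y xy; rewrite (detA x y xy). Qed.

Lemma determined_has N (I : Type) (s : seq I) (E : I -> word -> bool) :
  (forall a, determined N (E a)) -> determined N (fun x => has (E^~ x) s).
Proof. by move=> detE x y xy; apply: eq_has => a; apply: detE. Qed.

Definition occ x l t : nat := \sum_(s < t) (x s == l).

Definition occ_max x t : nat := \max_(j < d) occ x j t.

Definition coleaders i j t x : bool :=
  (occ x i t == occ_max x t) && (occ x j t == occ_max x t).

Definition no_coleaders i j m n x : bool :=
  all (fun t => ~~ coleaders i j t x) (index_iota m n.+1).

Lemma no_coleadersP i j m n x :
  reflect (forall t, m <= t <= n -> ~~ coleaders i j t x) (no_coleaders i j m n x).
Proof.
by apply: (iffP allP) => h t; rewrite ?mem_index_iota ?ltnS => tmn; apply: h;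
  rewrite ?mem_index_iota ?ltnS.
Qed.

Lemma no_coleadersPn i j m n x :
  reflect (exists2 t, m <= t <= n & coleaders i j t x) (~~ no_coleaders i j m n x).
Proof.
by apply: (iffP allPn) => -[t tmn tie]; exists t; move: tmn tie;
  rewrite ?mem_index_iota ?ltnS ?negbK.
Qed.

Lemma no_coleaders_subwindow i j m m' n n' x : m <= m' -> n' <= n ->
  no_coleaders i j m n x -> no_coleaders i j m' n' x.
Proof.
move=> mm' n'n /no_coleadersP h; apply/no_coleadersP => t /andP[m't tn'].
by apply: h; rewrite (leq_trans mm' m't) (leq_trans tn' n'n).
Qed.

Lemma occ_determined x y l t :
  (forall k, k < t -> x k = y k) -> occ x l t = occ y l t.
Proof. by move=> xy; apply: eq_bigr => s _; rewrite xy. Qed.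

Lemma eq_coleaders i j t x y :
  (forall l, occ x l t = occ y l t) -> coleaders i j t x = coleaders i j t y.
Proof. by move=> occE; rewrite /coleaders /occ_max !occE; under eq_bigr do rewrite occE. Qed.

Lemma coleaders_determined i j t : determined t (coleaders i j t).
Proof. by move=> x y xy; apply: eq_coleaders => l; apply: occ_determined. Qed.

Lemma no_coleaders_determined i j m n : determined n (no_coleaders i j m n).
Proof.
move=> x y xy; apply: eq_in_all => t; rewrite mem_index_iota ltnS => /andP[_ tn].
by congr (~~ _); apply: coleaders_determined => k kt; apply: xy; lia.
Qed.

Lemma occ_involution x l t (sigma : nat -> nat) : involutive sigma ->
  (forall k, k < t -> sigma k < t) -> occ (x \o sigma) l t = occ x l t.
Proof. exact: (big_ord_involution _ (fun s => nat_of_bool (x s == l))). Qed.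

Lemma no_coleaders_swap_blocks i j m n k x : k + k <= m ->
  no_coleaders i j m n (x \o swap_blocks k) = no_coleaders i j m n x.
Proof.
move=> km; apply: eq_in_all => t; rewrite mem_index_iota => /andP[mt _].
congr (~~ _); apply: eq_coleaders => l; apply: occ_involution; first exact: swap_blocksK.
by move=> s; apply: swap_blocks_lt; lia.
Qed.

Lemma occ_relabel (s : {perm 'I_d}) x l t : occ (s \o x) (s l) t = occ x l t.
Proof. by apply: eq_bigr => k _; rewrite /= (inj_eq perm_inj). Qed.

Lemma no_coleaders_relabel (s : {perm 'I_d}) i j m n x :
  no_coleaders (s i) (s j) m n (s \o x) = no_coleaders i j m n x.
Proof.
have occ_maxE t : occ_max (s \o x) t = occ_max x t.
  by rewrite /occ_max (reindex_inj (@perm_inj _ s)); apply: eq_bigr => l _; rewrite occ_relabel.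
by apply: eq_all => t; rewrite /coleaders !occ_relabel occ_maxE.
Qed.

Lemma occ_le_max x l t : occ x l t <= occ_max x t.
Proof. exact: (@leq_bigmax _ (fun j => occ x j t)). Qed.

Lemma exists_leader x t : 0 < d -> exists l, occ x l t = occ_max x t.
Proof.
rewrite -[X in 0 < X]card_ord => d_gt0.
by have [l maxE] := bigop.eq_bigmax (fun j => occ x j t) d_gt0; exists l; rewrite /occ_max maxE.
Qed.

Lemma occS x l t : occ x l t.+1 = occ x l t + (x t == l).
Proof. by rewrite /occ big_ord_recr. Qed.

(* Without ties, the leader keeps a strict lead, which one ball cannot erase. *)
Lemma leader_persists x m n L :
  (forall t k l, m <= t <= n -> k != l -> ~~ coleaders k l t x) ->
  occ x L m = occ_max x m -> forall t, m <= t <= n -> occ x L t = occ_max x t.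
Proof.
move=> no_ties leadL; elim=> [|t IH] /andP[mt tn]; first by move: mt; rewrite leqn0 => /eqP <-.
case: (ltngtP m t.+1) mt => // [mt _ | <- _]; last by [].
have tmn : m <= t <= n by rewrite -ltnS mt ltnW.
have {}IH : occ x L t = occ_max x t by apply: IH.
apply/eqP; rewrite eqn_leq occ_le_max /=; apply/bigmax_leqP => l _.
have [-> // | Ll] := eqVneq L l.
have lagl : occ x l t < occ x L t.
  rewrite ltn_neqAle IH occ_le_max andbT.
  apply: contraNneq (no_ties t L l tmn Ll) => occl.
  by rewrite /coleaders IH occl !eqxx.
by rewrite !occS; case: (x t == l); case: (x t == L); lia.
Qed.

Definition lag_or_tie m n (kl : 'I_d * 'I_d) x : bool :=
  if kl.1 == kl.2 then no_coleaders kl.1 kl.1 m n x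
  else ~~ no_coleaders kl.1 kl.2 m n x.

Lemma lag_or_tie_determined m n kl : determined n (lag_or_tie m n kl).
Proof.
rewrite /lag_or_tie; case: (_ == _); last apply: determined_neg;
  exact: no_coleaders_determined.
Qed.

Lemma exists_lag_or_tie i j m n x : i != j -> exists kl, lag_or_tie m n kl x.
Proof.
move=> ij; rewrite /lag_or_tie.
case: (boolP [exists kl : 'I_d * 'I_d, (kl.1 != kl.2) && ~~ no_coleaders kl.1 kl.2 m n x]).
  by move=> /existsP[kl /andP[kl12 tie]]; exists kl; rewrite (negbTE kl12).
rewrite negb_exists => /forallP no_tie.
have no_ties t k l : m <= t <= n -> k != l -> ~~ coleaders k l t x.
  by move=> tmn kl; move: (no_tie (k, l)); rewrite /= kl negbK => /no_coleadersP; apply.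
have [L leadL] := exists_leader x m (leq_ltn_trans (leq0n i) (ltn_ord i)).
pose k := if i == L then j else i.
have Lk : L != k by rewrite /k; case: (eqVneq i L) => [<- | iL] //=; rewrite eq_sym.
exists (k, k); rewrite /= eqxx; apply/no_coleadersP => t tmn.
apply: contra (no_ties t L k tmn Lk).
by rewrite /coleaders (leader_persists no_ties leadL tmn) eqxx => /andP[].
Qed.

End Words.

Arguments coleaders_determined {d} i j t.
Arguments no_coleaders_determined {d} i j m n.
Arguments lag_or_tie_determined {d} m n kl.

Local Open Scope ring_scope.

Section BallsInBins.
Context (dsp : measure_display) (T : measurableType dsp) (R : realType)
  (P : probability T R) (d : nat) (d_gt0 : (0 < d)%N) (X : nat -> T -> 'I_d)
  (X_iid : iid_uniform P X).

Implicit Types (A B : word d -> bool).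

Definition traj (w : T) : word d := fun k => X k w.

Definition event A : set T := [set w | A (traj w)].

Definition prob A : R := fine (P (event A)).

Definition extend N (f : {ffun 'I_N -> 'I_d}) : word d :=
  fun k => if insub k is Some i then f i else Ordinal d_gt0.

Lemma extend_ord N (f : {ffun 'I_N -> 'I_d}) (i : 'I_N) : extend f i = f i.
Proof. by rewrite /extend valK. Qed.

Lemma determined_extend N A (f : {ffun 'I_N -> 'I_d}) (x : word d) :
  determined N A -> (forall i : 'I_N, f i = x i) -> A (extend f) = A x.
Proof. by move=> detA fx; apply: detA => k kN; rewrite -[k]/(val (Ordinal kN)) extend_ord. Qed.

Definition cylinder N (f : {ffun 'I_N -> 'I_d}) : set T :=
  \big[setI/setT]_(t <- iota 0 N) (X t @^-1` [set extend f t]).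

Lemma cylinderP N (f : {ffun 'I_N -> 'I_d}) w :
  cylinder f w <-> forall i : 'I_N, X i w = f i.
Proof.
rewrite /cylinder -bigcap_seq; split => [cf i | cf t /=].
  by rewrite -extend_ord; apply: cf; rewrite /= mem_iota ltn_ord.
rewrite mem_iota add0n => tN.
by rewrite -[t]/(val (Ordinal tN)) extend_ord cf.
Qed.

Lemma measurable_cylinder N (f : {ffun 'I_N -> 'I_d}) : measurable (cylinder f).
Proof. by apply: bigsetI_measurable => t _; apply: X_iid.1. Qed.

Lemma P_cylinder N (f : {ffun 'I_N -> 'I_d}) : P (cylinder f) = ((d%:R^-1) ^+ N)%:E.
Proof. by rewrite /cylinder X_iid.2 ?iota_uniq // size_iota. Qed.

Lemma event_cylinders N A : determined N A ->
  event A = \big[setU/set0]_(f : {ffun 'I_N -> 'I_d} | A (extend f)) cylinder f.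
Proof.
move=> detA; rewrite -bigcup_seq_cond; apply/seteqP; split => w /=.
  move=> Aw; exists [ffun i : 'I_N => X i w]; last by apply/cylinderP => i; rewrite ffunE.
  by rewrite /= mem_index_enum (determined_extend (x := traj w)) // => i; rewrite ffunE.
move=> [f /andP[_ Af] /cylinderP cf]; rewrite /event /= -(determined_extend detA (f := f)) //.
by move=> i; rewrite -cf.
Qed.

Lemma measurable_event N A : determined N A -> measurable (event A).
Proof.
by move=> detA; rewrite (event_cylinders detA); apply: bigsetU_measurable => f _;
  apply: measurable_cylinder.
Qed.

Lemma measure_cylinders N (s : seq {ffun 'I_N -> 'I_d}) (Q : pred {ffun 'I_N -> 'I_d}) :
  uniq s ->
  P (\big[setU/set0]_(f <- s | Q f) cylinder f) = (\sum_(f <- s | Q f) P (cylinder f))%E.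
Proof.
elim: s => [|g s IH]; first by rewrite !big_nil measure0.
rewrite /= => /andP[gs s_uniq]; rewrite !big_cons; case: ifP => Qg; last exact: IH.
rewrite measureU; first by congr (_ + _)%E; apply: IH.
- exact: measurable_cylinder.
- by apply: bigsetU_measurable => f _; apply: measurable_cylinder.
apply/seteqP; split => // w [/cylinderP cg]; rewrite -bigcup_seq_cond.
move=> [f /andP[fs _] /cylinderP cf]; move: gs; suff -> : g = f by rewrite fs.
by apply/ffunP => i; rewrite -cf -cg.
Qed.

Lemma P_event N A : determined N A ->
  P (event A) = (\sum_(f : {ffun 'I_N -> 'I_d} | A (extend f)) d%:R^-1 ^+ N)%:E.
Proof.
move=> detA; rewrite (event_cylinders detA) measure_cylinders ?index_enum_uniq //.
by rewrite -sumEFin; apply: eq_bigr => f _; rewrite P_cylinder.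
Qed.

Lemma prob_sum N A : determined N A ->
  prob A = \sum_(f : {ffun 'I_N -> 'I_d} | A (extend f)) d%:R^-1 ^+ N.
Proof. by move=> detA; rewrite /prob (P_event detA). Qed.

Lemma P_event_prob N A : determined N A -> P (event A) = (prob A)%:E.
Proof. by move=> detA; rewrite (prob_sum detA) (P_event detA). Qed.

Lemma eq_prob A B : A =1 B -> prob A = prob B.
Proof. by move=> /funext ->. Qed.

Lemma le_prob N N' A B : determined N A -> determined N' B ->
  (forall x, A x -> B x) -> prob A <= prob B.
Proof.
move=> detA detB AB; rewrite -lee_fin -(P_event_prob detA) -(P_event_prob detB).
apply: le_measure; rewrite ?inE; [exact: measurable_event detA |
  exact: measurable_event detB | by move=> w /AB].
Qed.

Lemma prob_ge0 N A : determined N A -> 0 <= prob A.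
Proof.
by move=> detA; rewrite (prob_sum detA); apply: sumr_ge0 => f _;
  rewrite exprn_ge0 // invr_ge0.
Qed.

Lemma probT : prob xpredT = 1.
Proof. by rewrite /prob (_ : event _ = setT) ?probability_setT //; apply/seteqP. Qed.

Lemma prob0 : prob xpred0 = 0.
Proof. by rewrite /prob (_ : event _ = set0) ?measure0 //; apply/seteqP; split => w. Qed.

Lemma prob_le1 N A : determined N A -> prob A <= 1.
Proof. by move=> detA; rewrite -probT; apply: (le_prob (N' := 0%N) detA). Qed.

Lemma probID N A B : determined N A -> determined N B ->
  prob B = prob (fun x => B x && A x) + prob (fun x => B x && ~~ A x).
Proof.
move=> detA detB; set BA := fun x => _ && A x; set BnA := fun x => _ && ~~ A x.
have detBA : determined N BA := determined_and detB detA.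
have detBnA : determined N BnA := determined_and detB (determined_neg detA).
apply: EFin_inj; rewrite EFinD -(P_event_prob detB) -(P_event_prob detBA).
rewrite -(P_event_prob detBnA) -measureU.
- by congr (P _); apply/seteqP; split => w; rewrite /event /BA /BnA /=;
    case: (A _); case: (B _) => //=; tauto.
- exact: measurable_event detBA.
- exact: measurable_event detBnA.
by apply/seteqP; split => // w; rewrite /event /BA /BnA /= => -[/andP[_ ->] /andP[]].
Qed.

Lemma probC N A : determined N A -> prob (fun x => ~~ A x) = 1 - prob A.
Proof.
move=> detA; rewrite -probT (probID detA (B := xpredT)) //.
by rewrite addrAC subrr add0r.
Qed.

Lemma prob_or_le N A B : determined N A -> determined N B ->
  prob (fun x => A x || B x) <= prob A + prob B.
Proof.
move=> detA detB; rewrite -lee_fin EFinD -(P_event_prob detA) -(P_event_prob detB).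
rewrite -(P_event_prob (determined_or detA detB)).
have -> : event (fun x => A x || B x) = event A `|` event B.
  apply/seteqP; split => w; rewrite /event /=; first by case/orP; [left | right].
  by case=> ->; rewrite ?orbT.
exact: measureU2 (measurable_event detA) (measurable_event detB).
Qed.

Lemma prob_has_le N (I : Type) (s : seq I) (E : I -> word d -> bool) :
  (forall a, determined N (E a)) ->
  prob (fun x => has (E^~ x) s) <= \sum_(a <- s) prob (E a).
Proof.
move=> detE; elim: s => [|a s IH]; first by rewrite big_nil prob0.
rewrite big_cons; apply: le_trans (prob_or_le (detE a) (determined_has s detE)) _.
exact: lerD.
Qed.

Lemma prob_cover_card N (I : finType) (E : I -> word d -> bool) e :
  (forall a, determined N (E a)) -> (forall x, exists a, E a x) ->
  (forall a, prob (E a) <= e) -> 1 <= e *+ #|I|.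
Proof.
move=> detE cover E_le.
have : \sum_a prob (E a) <= \sum_(a : I) e by apply: ler_sum => a _; apply: E_le.
rewrite sumr_const => sum_le; apply: le_trans sum_le.
rewrite -probT (eq_prob (B := fun x => has (E^~ x) (index_enum I))).
  exact: prob_has_le.
by move=> x; have [a Ea] := cover x; symmetry; apply/hasP; exists a; rewrite ?mem_index_enum.
Qed.

Lemma prob_cover_large N (I : finType) (E : I -> word d -> bool) :
  (forall a, determined N (E a)) -> (forall x, exists a, E a x) ->
  exists a, (#|I|%:R)^-1 / 2 < prob (E a).
Proof.
move=> detE cover; have [a0 _] := cover (fun _ => Ordinal d_gt0).
have card_neq0 : #|I|%:R != 0 :> R by rewrite pnatr_eq0 -lt0n; apply/card_gt0P; exists a0.
have [/existsP // | /existsPn small] := boolP [exists a, (#|I|%:R)^-1 / 2 < prob (E a)].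
have half : (#|I|%:R)^-1 / 2 *+ #|I| = 1 / 2 :> R by rewrite -mulr_natr; field.
have E_le a : prob (E a) <= (#|I|%:R)^-1 / 2 by rewrite leNgt small.
by have := prob_cover_card detE cover E_le; rewrite half; lra.
Qed.

Lemma prob_comp N A (phi : word d -> word d)
    (h : {ffun 'I_N -> 'I_d} -> {ffun 'I_N -> 'I_d}) :
  determined N A -> determined N (A \o phi) -> injective h ->
  (forall f (i : 'I_N), phi (extend f) i = h f i) -> prob (A \o phi) = prob A.
Proof.
move=> detA detAphi h_inj phiE; rewrite (prob_sum detAphi) (prob_sum detA).
rewrite [RHS](reindex_inj h_inj); apply: eq_bigl => f /=.
by symmetry; apply: determined_extend => // i; rewrite phiE.
Qed.

Lemma prob_relabel N A (s : {perm 'I_d}) :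
  determined N A -> prob (fun x => A (s \o x)) = prob A.
Proof.
move=> detA; apply: (prob_comp (phi := fun x => s \o x) (h := fun f => [ffun i => s (f i)])).
- exact: detA.
- by move=> x y xy; apply: detA => k kN /=; rewrite xy.
- by move=> f g /ffunP fg; apply/ffunP => i; have := fg i; rewrite !ffunE => /perm_inj.
- by move=> f i; rewrite ffunE /= extend_ord.
Qed.

Lemma prob_involution N A (sigma : nat -> nat) :
  involutive sigma -> (forall k, (k < N)%N -> (sigma k < N)%N) ->
  determined N A -> prob (fun x => A (x \o sigma)) = prob A.
Proof.
move=> sigmaK sigma_lt detA; pose sigma_ord (i : 'I_N) := Ordinal (sigma_lt i (ltn_ord i)).
have sigma_ordK : involutive sigma_ord by move=> i; apply: val_inj; rewrite /= sigmaK.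
pose h (f : {ffun 'I_N -> 'I_d}) := [ffun i => f (sigma_ord i)].
have hK : involutive h by move=> f; apply/ffunP => i; rewrite !ffunE sigma_ordK.
apply: (prob_comp (phi := fun x => x \o sigma) (h := h) _ _ (inv_inj hK)).
- exact: detA.
- by move=> x y xy; apply: detA => k kN /=; rewrite xy ?sigma_lt.
- by move=> f i; rewrite ffunE /= -[sigma i]/(val (sigma_ord i)) extend_ord.
Qed.

Lemma prob_shift_mul n n' A B : determined n A -> determined n' B ->
  prob (fun x => A x && B (fun k => x (k + n)%N)) = prob A * prob B.
Proof.
move=> detA detB.
have detAB : determined (n + n') (fun x => A x && B (fun k => x (k + n)%N)).
  apply: determined_and; first exact: determined_le (leq_addr _ _) detA.
  by move=> x y xy; apply: detB => k kn'; apply: xy; rewrite addnC ltn_add2l.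
rewrite (prob_sum detAB) (prob_sum detA) (prob_sum detB) big_distrlr pair_big_dep /=.
pose glue (p : {ffun 'I_n -> 'I_d} * {ffun 'I_n' -> 'I_d}) : {ffun 'I_(n + n') -> 'I_d} :=
  [ffun k : 'I_(n + n') => match fintype.split k with inl a => p.1 a | inr b => p.2 b end].
have glue_l p a : glue p (lshift n' a) = p.1 a.
  by rewrite ffunE -[lshift n' a]/(unsplit (inl a)) unsplitK.
have glue_r p b : glue p (rshift n b) = p.2 b.
  by rewrite ffunE -[rshift n b]/(unsplit (inr b)) unsplitK.
have glue_bij : bijective glue.
  exists (fun F : {ffun 'I_(n + n') -> 'I_d} =>
    ([ffun a => F (lshift n' a)], [ffun b => F (rshift n b)])).
    by case=> f g; congr pair; apply/ffunP => a; rewrite ffunE ?glue_l ?glue_r.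
  by move=> F; apply/ffunP => k; rewrite ffunE -{2}(splitK k); case: (fintype.split k) => a;
    rewrite ffunE.
rewrite (reindex glue) /=; last exact: onW_bij.
apply: eq_big => [p | p _]; last by rewrite exprD.
congr andb; symmetry; apply: determined_extend => // i.
  by rewrite -glue_l /= -[val i]/(val (lshift n' i)) extend_ord.
by rewrite -glue_r /= [(i + n)%N]addnC -[(n + i)%N]/(val (rshift n i)) extend_ord.
Qed.

(* [A'], which is [A] read from time [n] on, is independent of [A], and
   exchanging the first two blocks of length [n] maps it to [A] while fixing
   [C]; so [C <= (A /\ A') \/ (C /\ ~ A) \/ (C /\ ~ A')] yields
   [P(C) <= P(A)^2 + 2 P(C /\ ~ A)]. *)
Lemma prob_swap_blocks_le n N A C : (n + n <= N)%N -> determined n A -> determined N C ->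
  (forall x, C (x \o swap_blocks n) = C x) ->
  2 * prob (fun x => C x && A x) <= prob A ^+ 2 + prob C.
Proof.
move=> nnN detA detC C_swap; pose A' x := A (fun k => x (k + n)%N).
have detAN : determined N A by apply: determined_le detA; lia.
have detA' : determined N A' by move=> x y xy; apply: detA => k kn; apply: xy; lia.
have detAA' := determined_and detAN detA'.
have detCnA := determined_and detC (determined_neg detAN).
have detCnA' := determined_and detC (determined_neg detA').
have cover : prob C <= prob (fun x => A x && A' x) + prob (fun x => C x && ~~ A x)
                        + prob (fun x => C x && ~~ A' x).
  apply: le_trans (le_prob detC (determined_or (determined_or detAA' detCnA) detCnA') _) _.
    by move=> x Cx; rewrite Cx /=; case: (A x); case: (A' x).
  apply: le_trans (prob_or_le (determined_or detAA' detCnA) detCnA') _.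
  by rewrite lerD2r; exact: prob_or_le detAA' detCnA.
have swap : prob (fun x => C x && ~~ A' x) = prob (fun x => C x && ~~ A x).
  rewrite -(prob_involution (swap_blocksK n) _ detCnA'); last first.
    by move=> k; apply: swap_blocks_lt.
  apply: eq_prob => x /=; rewrite C_swap; congr (_ && ~~ _).
  by apply: detA => k kn /=; rewrite swap_blocks_shift.
have indep : prob (fun x => A x && A' x) = prob A ^+ 2.
  by rewrite expr2 -(prob_shift_mul detA detA).
have := probID detAN detC; lra.
Qed.

Section ZeroOne.
Variable B : nat -> nat -> word d -> bool.
Hypothesis B_determined : forall m n, determined n (B m n).
Hypothesis B_window : forall m m' n n' x,
  (m <= m')%N -> (n' <= n)%N -> B m n x -> B m' n' x.
Hypothesis B_swap_blocks : forall m n k x,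
  (k + k <= m)%N -> B m n (x \o swap_blocks k) = B m n x.
Arguments B_determined : clear implicits.

(* [q m] is the probability that [B m n] holds for every [n], and [p] the
   probability that this happens for some [m]. *)
Let q m := inf (range (fun n => prob (B m n))).
Let p := sup (range q).

Let has_inf_q m : has_inf (range (fun n => prob (B m n))).
Proof.
split; first by exists (prob (B m 0)), 0%N.
by exists 0 => _ [n _ <-]; apply: prob_ge0 (B_determined m n).
Qed.

Let q_le m n : q m <= prob (B m n).
Proof. by apply: ge_inf; [exact: (has_inf_q m).2 | exists n]. Qed.

Let q_ge0 m : 0 <= q m.
Proof.
apply: lb_le_inf; first by exists (prob (B m 0)), 0%N.
by move=> _ [n _ <-]; apply: prob_ge0 (B_determined m n).
Qed.

Let q_le1 m : q m <= 1.
Proof. exact: le_trans (q_le m 0) (prob_le1 (B_determined m 0)). Qed.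

Let has_sup_p : has_sup (range q).
Proof. by split; [exists (q 0), 0%N | exists 1 => _ [m _ <-]; apply: q_le1]. Qed.

Let q_le_p m : q m <= p.
Proof. by apply: sup_upper_bound; [exact: has_sup_p | exists m]. Qed.

Let p_ge0 : 0 <= p.
Proof. exact: le_trans (q_ge0 0) (q_le_p 0). Qed.

Let p_le1 : p <= 1.
Proof. by apply: ge_sup; [exists (q 0), 0%N | move=> _ [m _ <-]; apply: q_le1]. Qed.

Let q_adherent m e : 0 < e -> exists n, prob (B m n) < q m + e.
Proof. by move=> e_gt0; have [_ [n _ <-] ?] := inf_adherent e_gt0 (has_inf_q m); exists n. Qed.

Let p_adherent e : 0 < e -> exists m, p - e < q m.
Proof. by move=> e_gt0; have [_ [m _ <-] ?] := sup_adherent e_gt0 has_sup_p; exists m. Qed.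

Lemma p_lt_sqr e : 0 < e -> p < (p + e) ^+ 2 + 3 * e.
Proof.
move=> e_gt0; have [m qm_gt] := p_adherent e_gt0.
have [n pA_lt] := q_adherent m e_gt0.
pose M := maxn m (n + n); have [N0 pCN0_lt] := q_adherent M e_gt0.
pose N := maxn N0 M.
have mM : (m <= M)%N := leq_maxl _ _.
have nnM : (n + n <= M)%N := leq_maxr _ _.
have N0N : (N0 <= N)%N := leq_maxl _ _.
have MN : (M <= N)%N := leq_maxr _ _.
have nN : (n <= N)%N by lia.
have := @prob_swap_blocks_le n N (B m n) (B M N) (leq_trans nnM MN)
  (B_determined m n) (B_determined M N) (fun x => B_swap_blocks _ x nnM).
have CA_ge : prob (B m N) <= prob (fun x => B M N x && B m n x).
  apply: le_prob (B_determined m N) (determined_and (B_determined M N) _) _ => [|x BmNx].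
    exact: determined_le nN (B_determined m n).
  by rewrite (B_window mM (leqnn N) BmNx) (B_window (leqnn m) nN BmNx).
have pC_le : prob (B M N) <= p + e.
  have : prob (B M N) <= prob (B M N0).
    by apply: le_prob (B_determined M N) (B_determined M N0) _ => x; apply: B_window.
  by move/le_lt_trans/(_ pCN0_lt)/ltW/le_trans; apply; rewrite lerD2r.
have pBmN_gt : p - e < prob (B m N) by apply: lt_le_trans qm_gt (q_le m N).
have pA_lt' : prob (B m n) < p + e by apply: lt_le_trans pA_lt _; rewrite lerD2r.
have pA_ge0 : 0 <= prob (B m n) := prob_ge0 (B_determined m n).
have pA_sqr : prob (B m n) ^+ 2 <= (p + e) ^+ 2.
  by rewrite lerXn2r ?nnegrE ?(ltW pA_lt') // (le_trans pA_ge0 (ltW pA_lt')).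
lra.
Qed.

Lemma p_eq01 : p = 0 \/ p = 1.
Proof.
have p_le_sqr : p <= p ^+ 2.
  apply/ler_addgt0Pr => e e_gt0; pose e' := Num.min (e / 8) 1.
  have e'_gt0 : 0 < e' by rewrite lt_min ltr01 andbT divr_gt0.
  have e'_le : e' <= e / 8 by rewrite ge_min lexx.
  have e'_le1 : e' <= 1 by rewrite ge_min lexx orbT.
  have pe'_le : p * e' <= e' := ler_piMl (ltW e'_gt0) p_le1.
  have e'e'_le : e' * e' <= e' := ler_piMl (ltW e'_gt0) e'_le1.
  have sqrE : (p + e') ^+ 2 = p ^+ 2 + 2 * (p * e') + e' * e' by ring.
  have := p_lt_sqr e'_gt0; rewrite sqrE; lra.
have p_sqr_le : p ^+ 2 <= p by rewrite expr2; exact: ler_piMl p_ge0 p_le1.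
have : p * (1 - p) = 0.
  by apply/eqP; rewrite mulrBr mulr1 -expr2 subr_eq0 eq_le p_le_sqr p_sqr_le.
by move/eqP; rewrite mulf_eq0 subr_eq0 => /orP[/eqP -> | /eqP <-]; [left | right].
Qed.

Lemma zero_one :
  (forall m e, 0 < e -> exists n, prob (B m n) < e) \/
  (forall e, 0 < e -> exists m, forall n, 1 - e < prob (B m n)).
Proof.
case: p_eq01 => p_eq; [left | right].
  move=> m e e_gt0; have [n pBmn_lt] := q_adherent m e_gt0; exists n.
  suff qm0 : q m = 0 by rewrite qm0 add0r in pBmn_lt.
  by apply/eqP; rewrite eq_le q_ge0 andbT -p_eq q_le_p.
move=> e e_gt0; have [m qm_gt] := p_adherent e_gt0; exists m => n.
by rewrite -p_eq; apply: lt_le_trans qm_gt (q_le m n).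
Qed.

End ZeroOne.

Lemma prob_no_coleaders_relabel (s : {perm 'I_d}) i j m n :
  prob (no_coleaders (s i) (s j) m n) = prob (no_coleaders i j m n).
Proof.
rewrite -(prob_relabel s (no_coleaders_determined _ _ _ _)).
by apply: eq_prob => x; rewrite /= no_coleaders_relabel.
Qed.

Lemma prob_no_coleaders_diag k l m n :
  prob (no_coleaders k k m n) = prob (no_coleaders l l m n).
Proof. by rewrite -(prob_no_coleaders_relabel (tperm l k)) tpermR. Qed.

Lemma no_coleaders_zero_one i j :
  (forall m e, 0 < e -> exists n, prob (no_coleaders i j m n) < e) \/
  (forall e, 0 < e -> exists m, forall n, 1 - e < prob (no_coleaders i j m n)).
Proof.
apply: zero_one => [m n | m m' n n' x | m n k x].
- exact: no_coleaders_determined.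
- exact: no_coleaders_subwindow.
- exact: no_coleaders_swap_blocks.
Qed.

Lemma leader_recurrent i m e : 0 < e -> exists n, prob (no_coleaders i i m n) < e.
Proof.
move=> e_gt0; case: (no_coleaders_zero_one i i) => [|tail_one]; first by apply.
have e0_gt0 : 0 < (#|'I_d|%:R)^-1 / 2 :> R by rewrite divr_gt0 // invr_gt0 card_ord ltr0n.
have [m0 nc_gt] := tail_one _ e0_gt0.
have cover (x : word d) : exists l, ~~ no_coleaders l l m0 m0 x.
  have [l l_leads] := exists_leader x m0 d_gt0; exists l.
  by apply/no_coleadersPn; exists m0; rewrite ?leqnn // /coleaders l_leads eqxx.
have [l] := prob_cover_large
  (fun l => determined_neg (no_coleaders_determined l l m0 m0)) cover.
rewrite (probC (no_coleaders_determined l l m0 m0)) (prob_no_coleaders_diag l i).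
by have := nc_gt m0; lra.
Qed.

Lemma coleaders_recurrent i j m e : i != j ->
  0 < e -> exists n, prob (no_coleaders i j m n) < e.
Proof.
move=> ij e_gt0; case: (no_coleaders_zero_one i j) => [|tail_one]; first by apply.
have e0_gt0 : 0 < (#|{: 'I_d * 'I_d}|%:R)^-1 / 2 :> R.
  by rewrite divr_gt0 // invr_gt0 card_prod card_ord ltr0n muln_gt0 d_gt0.
have [m0 nc_gt] := tail_one _ e0_gt0.
have [n0 lag_lt] := leader_recurrent i m0 e0_gt0.
have [[k l]] := prob_cover_large (lag_or_tie_determined m0 n0) (exists_lag_or_tie m0 n0 ^~ ij).
rewrite /lag_or_tie /=; case: (eqVneq k l) => [-> | kl] /=.
  by rewrite (prob_no_coleaders_diag l i); lra.
have [s [<- <-]] := exists_perm_pair ij kl.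
rewrite (probC (no_coleaders_determined _ _ m0 n0)) prob_no_coleaders_relabel.
by have := nc_gt n0; lra.
Qed.

Lemma no_coleaders_vanish i j m e : 0 < e -> exists n, prob (no_coleaders i j m n) < e.
Proof.
by have [<- | ij] := eqVneq i j; [apply: leader_recurrent | apply: coleaders_recurrent].
Qed.

Lemma ae_not_forever (B : nat -> nat -> word d -> bool) :
  (forall m n, determined n (B m n)) ->
  (forall m e, 0 < e -> exists n, prob (B m n) < e) ->
  {ae P, forall w, forall m, exists n, ~~ B m n (traj w)}.
Proof.
move=> B_det B_vanish; apply: ae_foralln => m.
have B_meas n : measurable (event (B m n)) := measurable_event (B_det m n).
exists (\bigcap_n event (B m n)); split.
- exact: bigcap_measurableType.
- apply/eqP; rewrite eq_le measure_ge0 andbT; apply/lee_addgt0Pr => e e_gt0.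
  have [n pB_lt] := B_vanish m e e_gt0; rewrite add0e.
  apply: (@le_trans _ _ (P (event (B m n)))).
    by apply: le_measure; rewrite ?inE //; [exact: bigcap_measurableType | move=> w /(_ n I)].
  by rewrite (P_event_prob (B_det m n)) lee_fin ltW.
- move=> w /= not_io n _; apply/negPn/negP => nB.
  by apply: not_io; exists n.
Qed.

End BallsInBins.

Theorem lemma4p9 (dsp : measure_display) (T : measurableType dsp)
  (R : realType) (P : probability T R) (d : nat) (hd : (0 < d)%N)
  (X : nat -> T -> 'I_d) (hX : iid_uniform P X) :
  (forall i : 'I_d, {ae P, forall w,
     forall m : nat, exists t : nat, (m <= t)%N /\
       nballs X i t w = maxballs X t w}) /\
  (forall i j : 'I_d, {ae P, forall w,
     forall m : nat, exists t : nat, (m <= t)%N /\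
       nballs X i t w = maxballs X t w /\ nballs X j t w = maxballs X t w}).
Proof.
have coleaders_io i j : {ae P, forall w, forall m : nat, exists t : nat, (m <= t)%N /\
    nballs X i t w = maxballs X t w /\ nballs X j t w = maxballs X t w}.
  have := ae_not_forever hd hX (no_coleaders_determined i j) (no_coleaders_vanish hd hX i j).
  apply: filterS => w io m; have [n /no_coleadersPn[t /andP[mt _] tie]] := io m.
  by exists t; move: tie => /andP[/eqP Ni /eqP Nj].
split=> [i | //]; apply: filterS (coleaders_io i i) => w io m.
by have [t [mt [Ni _]]] := io m; exists t.
Qed.
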